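(* Let $\pi_3$ be the five-dimensional complex associative algebra with basis $e_1,\dots,e_5$ and nonzero products $e_1e_1=e_2$, $e_1e_2=e_2e_1=e_3$, $e_1e_4=e_5$, $e_4e_4=e_5$ (all other products of basis elements are zero). The vector space $LocDer(\pi_3)$ of all local derivations of $\pi_3$ is a Lie algebra with respect to the bracket $[\nabla,\Delta]=\nabla\Delta-\Delta\nabla$; that is, $[\nabla,\Delta]\in LocDer(\pi_3)$ for all $\nabla,\Delta\in LocDer(\pi_3)$.
   Context: A derivation of an algebra $A$ is a linear map $D$ with $D(xy)=D(x)y+xD(y)$ for all $x,y\in A$. A linear map $\nabla:A\to A$ is a local derivation if for every $x\in A$ there is a derivation $D_x$ of $A$ (depending on $x$) with $\nabla(x)=D_x(x)$. *)

From mathcomp Require Import all_boot all_algebra.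
From mathcomp Require Import complex.
From mathcomp Require Import Rstruct.
From Stdlib Require Import Reals.
Set Implicit Arguments. Unset Strict Implicit. Unset Printing Implicit Defensive.
Import GRing.Theory.
Local Open Scope ring_scope.

Definition Cplx : fieldType := complex.complex R.

(* Elements of pi_3 are coordinate row vectors w.r.t. the basis e_1..e_5;
   index i : 'I_5 corresponds to e_(i+1). *)
Definition pi3 := 'rV[Cplx]_5.

Definition pi3_e (i : 'I_5) : pi3 := delta_mx 0 i.

Definition pi3_table (i j : 'I_5) : pi3 :=
  match nat_of_ord i, nat_of_ord j with
  | 0, 0 => pi3_e (inord 1)
  | 0, 1 => pi3_e (inord 2)
  | 1, 0 => pi3_e (inord 2)
  | 0, 3 => pi3_e (inord 4)
  | 3, 3 => pi3_e (inord 4)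
  | _, _ => 0
  end%N.

Definition pi3_mul (x y : pi3) : pi3 :=
  \sum_(i < 5) \sum_(j < 5) (x 0 i * y 0 j) *: pi3_table i j.

Definition is_derivation (K : fieldType) (V : lmodType K)
    (mul : V -> V -> V) (D : V -> V) : Prop :=
  (forall (a : K) (u v : V), D (a *: u + v) = a *: D u + D v) /\
  forall x y, D (mul x y) = mul (D x) y + mul x (D y).

Definition is_local_derivation (K : fieldType) (V : lmodType K)
    (mul : V -> V -> V) (N : V -> V) : Prop :=
  (forall (a : K) (u v : V), N (a *: u + v) = a *: N u + N v) /\
  forall x, exists D : V -> V, is_derivation mul D /\ N x = D x.

Definition lie_bracket (K : fieldType) (V : lmodType K) (N M : V -> V) : V -> V :=
  fun x => N (M x) - M (N x).

(* A derivation of pi_3 is determined by its values on the generators e1 and e4,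
   and the relations e4 e1 = 0 and e1 e4 = e4 e4 cut Der(pi_3) down to the
   six-parameter family [der_form]: diagonal (c, 2c, 3c, c, 2c), off-diagonal
   entries a21, a31, a32, a34, a51, a54, and a32 = 2 a21.  A local derivation
   agrees with some derivation on each e_i and on e1 + e4, e2 + e4, e2 + e5 and
   e3 + e5; this forces it into the seven-parameter family [loc_form], in which
   a32 is free.  Conversely, at any given vector the defect a32 - 2 a21 can be
   absorbed by another parameter, so [loc_form] is exactly LocDer(pi_3), and a
   direct computation shows that it is closed under commutators. *)

From mathcomp Require Import all_boot all_algebra.
From mathcomp Require Import complex Rstruct ring.
Set Implicit Arguments. Unset Strict Implicit. Unset Printing Implicit Defensive.
Import GRing.Theory.
Local Open Scope ring_scope.

Definition i0 : 'I_5 := @Ordinal 5 0 isT.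
Definition i1 : 'I_5 := @Ordinal 5 1 isT.
Definition i2 : 'I_5 := @Ordinal 5 2 isT.
Definition i3 : 'I_5 := @Ordinal 5 3 isT.
Definition i4 : 'I_5 := @Ordinal 5 4 isT.

Lemma big_ord5 (V : nmodType) (F : 'I_5 -> V) :
  \sum_(i < 5) F i = F i0 + F i1 + F i2 + F i3 + F i4.
Proof.
rewrite !big_ord_recl big_ord0 addr0 !addrA.
by congr (F _ + F _ + F _ + F _ + F _); apply: val_inj.
Qed.

Lemma row5P (T : Type) (v w : 'rV[T]_5) :
  v 0 i0 = w 0 i0 -> v 0 i1 = w 0 i1 -> v 0 i2 = w 0 i2 ->
  v 0 i3 = w 0 i3 -> v 0 i4 = w 0 i4 -> v = w.
Proof.
move=> ? ? ? ? ?; apply/rowP => -[[|[|[|[|[|k]]]]] lt_k5] //;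
  by rewrite (bool_irrelevance lt_k5 isT).
Qed.

Lemma linear_map0 (R : pzRingType) (U V : lmodType R) (f : U -> V) :
  linear f -> f 0 = 0.
Proof. by move=> linf; have := linf (-1) 0 0; rewrite scaler0 addr0 scaleN1r addNr. Qed.

Lemma linear_mapD (R : pzRingType) (U V : lmodType R) (f : U -> V) :
  linear f -> forall u v, f (u + v) = f u + f v.
Proof. by move=> linf u v; rewrite -[u in LHS]scale1r linf scale1r. Qed.

Lemma linear_row_sum (R : pzRingType) n (V : lmodType R) (f : 'rV[R]_n -> V) :
  linear f -> forall x, f x = \sum_j x 0 j *: f (delta_mx 0 j).
Proof.
move=> linf x; rewrite {1}[x]row_sum_delta.
rewrite (big_morph f (linear_mapD linf) (linear_map0 linf)).
by apply: eq_bigr => j _; rewrite -[_ *: _]addr0 linf linear_map0 ?addr0.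
Qed.

Lemma eq_local_derivation (K : fieldType) (V : lmodType K) (mul : V -> V -> V)
    (N M : V -> V) :
  N =1 M -> is_local_derivation mul M -> is_local_derivation mul N.
Proof.
move=> eqNM [linM locM]; split=> [a u v | x]; first by rewrite !eqNM linM.
by have [D [derD MxE]] := locM x; exists D; rewrite eqNM.
Qed.

Section Pi3.

Variable K : fieldType.
Implicit Types (x y : 'rV[K]_5) (N D : 'rV[K]_5 -> 'rV[K]_5).

Definition e (j : 'I_5) : 'rV[K]_5 := delta_mx 0 j.

Definition mul_table (i j : 'I_5) : 'rV[K]_5 :=
  match nat_of_ord i, nat_of_ord j with
  | 0, 0 => e (inord 1)
  | 0, 1 => e (inord 2)
  | 1, 0 => e (inord 2)
  | 0, 3 => e (inord 4)
  | 3, 3 => e (inord 4)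
  | _, _ => 0%R
  end%N.

Definition pmul x y : 'rV[K]_5 :=
  \sum_(i < 5) \sum_(j < 5) (x 0 i * y 0 j) *: mul_table i j.

Definition row5 (a b c d f : K) : 'rV[K]_5 := \row_k nth 0 [:: a; b; c; d; f] k.

Lemma pmulE x y : pmul x y = row5 0 (x 0 i0 * y 0 i0)
  (x 0 i0 * y 0 i1 + x 0 i1 * y 0 i0) 0 (x 0 i0 * y 0 i3 + x 0 i3 * y 0 i3).
Proof.
rewrite /pmul !big_ord5 /mul_table /=.
by apply: row5P; rewrite !mxE /= -!val_eqE /= !inordK //=; ring.
Qed.

(* [a_ij] is the entry (i, j) of the matrix in the paper's basis e1..e5, i.e. the
   coefficient of [x 0 (j-1)] in coordinate [i-1] of the image. *)
Definition loc_form (c a21 a31 a32 a34 a51 a54 : K) x : 'rV[K]_5 :=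
  row5 (c * x 0 i0) (a21 * x 0 i0 + 2 * c * x 0 i1)
    (a31 * x 0 i0 + a32 * x 0 i1 + 3 * c * x 0 i2 + a34 * x 0 i3)
    (c * x 0 i3) (a51 * x 0 i0 + a54 * x 0 i3 + 2 * c * x 0 i4).

Definition der_form (c a21 a31 a34 a51 a54 : K) :=
  loc_form c a21 a31 (2 * a21) a34 a51 a54.

Ltac coord := rewrite ?pmulE !mxE /= ?(mulr0, mul0r, mulr1, mul1r, addr0, add0r).

Lemma loc_form_linear c a21 a31 a32 a34 a51 a54 :
  linear (loc_form c a21 a31 a32 a34 a51 a54).
Proof. by move=> a x y; apply: row5P; coord; ring. Qed.

Lemma der_form_derivation c a21 a31 a34 a51 a54 :
  is_derivation pmul (der_form c a21 a31 a34 a51 a54).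
Proof.
split=> [|x y]; first exact: loc_form_linear.
by apply: row5P; coord; ring.
Qed.

Lemma derivation_der_form D : is_derivation pmul D ->
  exists c a21 a31 a34 a51 a54, D =1 der_form c a21 a31 a34 a51 a54.
Proof.
move=> [linD derD]; set y := D (e i0); set z := D (e i3).
have e00 : pmul (e i0) (e i0) = e i1 by apply: row5P; coord.
have e01 : pmul (e i0) (e i1) = e i2 by apply: row5P; coord.
have e03 : pmul (e i0) (e i3) = e i4 by apply: row5P; coord.
have e33 : pmul (e i3) (e i3) = e i4 by apply: row5P; coord.
have e30 : pmul (e i3) (e i0) = 0 by apply: row5P; coord.
have De1 : D (e i1) = pmul y (e i0) + pmul (e i0) y by rewrite -derD e00.
have De2 : D (e i2) = pmul y (e i1) + pmul (e i0) (D (e i1)) by rewrite -derD e01.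
have De4 : D (e i4) = pmul z (e i3) + pmul (e i3) z by rewrite -derD e33.
have [y3 z0 z1] : [/\ y 0 i3 = 0, z 0 i0 = 0 & z 0 i1 = 0].
  have /rowP Dz := derD (e i3) (e i0); rewrite e30 linear_map0 // in Dz.
  by split; [move: (Dz i4) | move: (Dz i1) | move: (Dz i2)]; coord => <-.
have z3 : z 0 i3 = y 0 i0.
  have /rowP/(_ i4) := derD (e i0) (e i3); rewrite e03 De4; coord; rewrite y3.
  by rewrite z0 add0r addr0 => /addIr.
exists (y 0 i0), (y 0 i1), (y 0 i2), (z 0 i2), (y 0 i4), (z 0 i4) => x.
rewrite (linear_row_sum linD) big_ord5 De2 De1 De4 -/y -/z.
by apply: row5P; coord; rewrite ?y3 ?z0 ?z1 ?z3; ring.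
Qed.

Lemma local_derivation_at N : is_local_derivation pmul N ->
  forall x, exists c a21 a31 a34 a51 a54, N x = der_form c a21 a31 a34 a51 a54 x.
Proof.
move=> [_ locN] x.
have [D [/derivation_der_form [c [a21 [a31 [a34 [a51 [a54 DE]]]]]] ->]] := locN x.
by exists c, a21, a31, a34, a51, a54.
Qed.

Lemma local_derivation_basis N : is_local_derivation pmul N ->
  [/\ N (e i0) = row5 (N (e i0) 0 i0) (N (e i0) 0 i1) (N (e i0) 0 i2) 0 (N (e i0) 0 i4),
      N (e i1) = row5 0 (N (e i1) 0 i1) (N (e i1) 0 i2) 0 0,
      N (e i2) = row5 0 0 (N (e i2) 0 i2) 0 0,
      N (e i3) = row5 0 0 (N (e i3) 0 i2) (N (e i3) 0 i3) (N (e i3) 0 i4)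
    & N (e i4) = row5 0 0 0 0 (N (e i4) 0 i4)].
Proof.
move=> /local_derivation_at Nx; split.
- by have [? [? [? [? [? [? ->]]]]]] := Nx (e i0); apply: row5P; coord.
- by have [? [? [? [? [? [? ->]]]]]] := Nx (e i1); apply: row5P; coord.
- by have [? [? [? [? [? [? ->]]]]]] := Nx (e i2); apply: row5P; coord.
- by have [? [? [? [? [? [? ->]]]]]] := Nx (e i3); apply: row5P; coord.
- by have [? [? [? [? [? [? ->]]]]]] := Nx (e i4); apply: row5P; coord.
Qed.

Lemma local_derivation_diagonal N : (2 : K) != 0 -> is_local_derivation pmul N ->
  [/\ N (e i1) 0 i1 = 2 * N (e i0) 0 i0, N (e i2) 0 i2 = 3 * N (e i0) 0 i0,
      N (e i3) 0 i3 = N (e i0) 0 i0 & N (e i4) 0 i4 = 2 * N (e i0) 0 i0].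
Proof.
move=> two_neq0 locN; have Nx := local_derivation_at locN.
have [E0 E1 E2 E3 E4] := local_derivation_basis locN.
have ND := linear_mapD locN.1.
have N33 : N (e i3) 0 i3 = N (e i0) 0 i0.
  have : N (e i0 + e i3) 0 i0 = N (e i0 + e i3) 0 i3.
    by have [? [? [? [? [? [? ->]]]]]] := Nx (e i0 + e i3); coord.
  by rewrite ND E0 E3; coord.
have N11 : N (e i1) 0 i1 = 2 * N (e i0) 0 i0.
  have : N (e i1 + e i3) 0 i1 = 2 * N (e i1 + e i3) 0 i3.
    by have [? [? [? [? [? [? ->]]]]]] := Nx (e i1 + e i3); coord; ring.
  by rewrite ND E1 E3; coord; rewrite N33.
have N44 : N (e i4) 0 i4 = 2 * N (e i0) 0 i0.
  have : N (e i1 + e i4) 0 i1 = N (e i1 + e i4) 0 i4.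
    by have [? [? [? [? [? [? ->]]]]]] := Nx (e i1 + e i4); coord; ring.
  by rewrite ND E1 E4; coord; rewrite N11.
split=> //.
have : 2 * N (e i2 + e i4) 0 i2 = 3 * N (e i2 + e i4) 0 i4.
  by have [? [? [? [? [? [? ->]]]]]] := Nx (e i2 + e i4); coord; ring.
by rewrite ND E2 E4; coord; rewrite N44 mulrCA => /(mulfI two_neq0).
Qed.

Lemma local_derivation_loc_form N : (2 : K) != 0 -> is_local_derivation pmul N ->
  exists c a21 a31 a32 a34 a51 a54, N =1 loc_form c a21 a31 a32 a34 a51 a54.
Proof.
move=> two_neq0 locN.
have [E0 E1 E2 E3 E4] := local_derivation_basis locN.
have [N11 N22 N33 N44] := local_derivation_diagonal two_neq0 locN.
exists (N (e i0) 0 i0), (N (e i0) 0 i1), (N (e i0) 0 i2), (N (e i1) 0 i2),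
  (N (e i3) 0 i2), (N (e i0) 0 i4), (N (e i3) 0 i4) => x.
rewrite (linear_row_sum locN.1) big_ord5 E0 E1 E2 E3 E4.
by apply: row5P; coord; rewrite ?N11 ?N22 ?N33 ?N44; ring.
Qed.

Lemma loc_form_local_derivation c a21 a31 a32 a34 a51 a54 : (2 : K) != 0 ->
  is_local_derivation pmul (loc_form c a21 a31 a32 a34 a51 a54).
Proof.
move=> two_neq0; split=> [|x]; first exact: loc_form_linear.
(* [a32 - 2 a21] only multiplies [x 0 i1] in coordinate [i2]; absorb it into the
   coefficient of [x 0 i0], else of [x 0 i3], else into [a21] itself. *)
have [x0_0 | x0_neq0] := eqVneq (x 0 i0) 0; last first.
  exists (der_form c a21 (a31 + (a32 - 2 * a21) * x 0 i1 / x 0 i0) a34 a51 a54).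
  by split; [exact: der_form_derivation | apply: row5P; coord; field].
have [x3_0 | x3_neq0] := eqVneq (x 0 i3) 0; last first.
  exists (der_form c a21 a31 (a34 + (a32 - 2 * a21) * x 0 i1 / x 0 i3) a51 a54).
  by split; [exact: der_form_derivation | apply: row5P; coord; rewrite ?x0_0; field].
exists (der_form c (a32 / 2) a31 a34 a51 a54).
by split; [exact: der_form_derivation | apply: row5P; coord; rewrite ?x0_0 ?x3_0; field].
Qed.

Lemma lie_bracket_loc_form N M c a21 a31 a32 a34 a51 a54 d b21 b31 b32 b34 b51 b54 :
  N =1 loc_form c a21 a31 a32 a34 a51 a54 -> M =1 loc_form d b21 b31 b32 b34 b51 b54 ->
  lie_bracket N M =1 loc_form 0 (c * b21 - d * a21)
    (2 * (c * b31 - d * a31) + a32 * b21 - b32 * a21) (c * b32 - d * a32)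
    (2 * (c * b34 - d * a34)) (c * b51 - d * a51) (c * b54 - d * a54).
Proof. by move=> EN EM x; rewrite /lie_bracket !EN !EM; apply: row5P; coord; ring. Qed.

Theorem local_derivation_lie_bracket N M : (2 : K) != 0 ->
  is_local_derivation pmul N -> is_local_derivation pmul M ->
  is_local_derivation pmul (lie_bracket N M).
Proof.
move=> two_neq0 /(local_derivation_loc_form two_neq0).
move=> [c [a21 [a31 [a32 [a34 [a51 [a54 EN]]]]]]].
move=> /(local_derivation_loc_form two_neq0) [d [b21 [b31 [b32 [b34 [b51 [b54 EM]]]]]]].
apply: eq_local_derivation (lie_bracket_loc_form EN EM) _.
exact: loc_form_local_derivation.
Qed.

End Pi3.

Theorem theorem6p1 :
  forall N M : pi3 -> pi3,
    is_local_derivation pi3_mul N ->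
    is_local_derivation pi3_mul M ->
    is_local_derivation pi3_mul (lie_bracket N M).
Proof.
by move=> N M; apply: local_derivation_lie_bracket; rewrite Num.Theory.pnatr_eq0.
Qed.
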